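(* For any graph $\Gamma$, the dimer complex $X_{\mathcal{D}}(\Gamma)$ is a nonpositively curved cubed complex.
   Context: A graph is a nonempty 1-dimensional CW-complex with no loops and no isolated vertices (multiple edges allowed); $E$ is its edge set. The power group $2^E$ is the group of subsets of $E$ under symmetric difference. An even cycle is a finite set of edges forming an embedded circle with an even number of edges; two edge sets are independent if no edge of one shares a vertex with an edge of the other. $\mathcal{D}=\mathcal{D}(\Gamma)$ is the set of perfect matchings (edge sets meeting every vertex in exactly one edge). For a finite set $T$ of pairwise independent even cycles let $[T]=\bigcup_{t\in T}t$ (the product in $2^E$). The dimer complex $X_{\mathcal{D}}$ is the cubed complex with one $k$-cube for each pair $(A,S)$ where $A\in\mathcal{D}$ and $S$ is a set of $k$ pairwise independent even cycles with $[T]A\in\mathcal{D}$ for all $T\subset S$, the pairs $(A,S)$ and $([T]A,S)$ ($T\subset S$) giving the same cube; the vertices of this cube are the perfect matchings $[T]A$, $T\subset S$, and its faces are the cubes of $(A,S')$, $S'\subset S$ (so $A,B\in\mathcal{D}$ are joined by an edge iff $AB$ is an even cycle). A cubed complex is nonpositively curved if the link of each 0-cell is a simplicial complex and is a flag complex. *)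

(* A graph is given by a type V of 0-cells, a type E of
   1-cells, and the two endpoint maps src, tgt : E -> V (orientation is
   irrelevant; everything below is symmetric in src/tgt).  Graphs may be
   infinite and locally infinite; multiple edges are allowed. *)
From Stdlib Require Import Arith List PeanoNat.
Import ListNotations.

Section Dimer.
Variables (V E : Type) (src tgt : E -> V).

(* subsets of E, i.e. elements of the power group 2^E *)
Definition eset := E -> Prop.
Definition cset := eset -> Prop.

Definition incident (e : E) (v : V) : Prop := src e = v \/ tgt e = v.

Definition share_vertex (e f : E) : Prop :=
  exists v, incident e v /\ incident f v.

(* product in the power group 2^E = symmetric difference *)
Definition esymdiff (X Y : eset) : eset :=
  fun e => (X e /\ ~ Y e) \/ (~ X e /\ Y e).

Definition csymdiff (X Y : cset) : cset :=
  fun c => (X c /\ ~ Y c) \/ (~ X c /\ Y c).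

Definition csubset (T S : cset) : Prop := forall c, T c -> S c.

Definition cfinite (S : cset) : Prop :=
  exists l : list eset, forall c, S c <-> In c l.

Definition perfect_matching (A : eset) : Prop :=
  forall v, exists e, A e /\ incident e v /\
    forall f, A f -> incident f v -> f = e.

(* even cycle: a finite set of edges forming an embedded circle
   v_0 -e_0- v_1 -e_1- ... -e_{n-1}- v_0 with distinct vertices, distinct
   edges, and n even (n >= 2; n = 2 means two parallel edges). *)
Definition even_cycle (C : eset) : Prop :=
  exists (n : nat) (vs : nat -> V) (es : nat -> E),
    2 <= n /\ Nat.Even n /\
    (forall i j, i < n -> j < n -> vs i = vs j -> i = j) /\
    (forall i j, i < n -> j < n -> es i = es j -> i = j) /\
    (forall i, i < n ->
        (src (es i) = vs i /\ tgt (es i) = vs (S i mod n)) \/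
        (tgt (es i) = vs i /\ src (es i) = vs (S i mod n))) /\
    (forall e, C e <-> exists i, i < n /\ es i = e).

Definition independent (X Y : eset) : Prop :=
  forall e f, X e -> Y f -> ~ share_vertex e f.

(* [T] = union of the cycles in T (their product in 2^E) *)
Definition bracket (T : cset) : eset := fun e => exists c, T c /\ c e.

Definition act (T : cset) (A : eset) : eset := esymdiff (bracket T) A.

(* (A,S) defines a cube of the dimer complex *)
Definition cube_ok (A : eset) (S : cset) : Prop :=
  perfect_matching A /\ cfinite S /\
  (forall c, S c -> even_cycle c) /\
  (forall c d, S c -> S d -> c <> d -> independent c d) /\
  (forall T, csubset T S -> perfect_matching (act T A)).

(* A corner of a cube: a representative (B,S) of the cube together with
   the vertex [T0]B of that cube (T0 a subset of S). *)
Record corner := Corner { cbase : eset; ccyc : cset; cvtx : cset }.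

Definition is_corner (A : eset) (k : corner) : Prop :=
  cube_ok (cbase k) (ccyc k) /\ csubset (cvtx k) (ccyc k) /\
  act (cvtx k) (cbase k) = A.

(* The identification (B,S) ~ ([T]B,S) of cubes, which sends the vertex
   [T0]B of the first representative to the vertex indexed by T0 (+) T of the
   second one; two corners are equal iff related in this way. *)
Definition corner_eq (k k' : corner) : Prop :=
  ccyc k' = ccyc k /\
  exists T, csubset T (ccyc k) /\ cbase k' = act T (cbase k) /\
            cvtx k' = csymdiff (cvtx k) T.

Definition edge_corner (A : eset) (c : eset) : corner :=
  Corner A (fun d => d = c) (fun _ => False).

(* Vertices of the link of A: corners at A of 1-cubes. *)
Definition link_vertex (A : eset) (u : corner) : Prop :=
  is_corner A u /\ exists c, forall d, ccyc u d <-> d = c.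

(* u is a vertex of the simplex of the link of A determined by the corner k
   at A (k = (B,S,T0) with [T0]B = A): u is the corner at A of the edge of
   the cube in some direction c in S. *)
Definition simplex_vertex (A : eset) (k : corner) (u : corner) : Prop :=
  exists c, ccyc k c /\ corner_eq (edge_corner A c) u.

(* The link of A is a simplicial complex: every simplex has pairwise
   distinct vertices, and a simplex is determined by its vertex set. *)
Definition link_simplicial (A : eset) : Prop :=
  (forall k, is_corner A k -> forall c d, ccyc k c -> ccyc k d ->
      corner_eq (edge_corner A c) (edge_corner A d) -> c = d) /\
  (forall k1 k2, is_corner A k1 -> is_corner A k2 ->
      (forall u, simplex_vertex A k1 u <-> simplex_vertex A k2 u) ->
      corner_eq k1 k2).

(* The link of A is flag: any finite set of link vertices which pairwise
   span an edge of the link spans a simplex of the link. *)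
Definition link_flag (A : eset) : Prop :=
  forall L : list corner,
    (forall u, In u L -> link_vertex A u) ->
    (forall u v, In u L -> In v L -> ~ corner_eq u v ->
       exists k, is_corner A k /\
         forall w, simplex_vertex A k w <-> (corner_eq u w \/ corner_eq v w)) ->
    exists k, is_corner A k /\
      forall w, simplex_vertex A k w <-> exists u, In u L /\ corner_eq u w.

(* X_D is nonpositively curved: the link of every 0-cell (perfect
   matching) is a simplicial flag complex. *)
Definition dimer_npc : Prop :=
  forall A, perfect_matching A -> link_simplicial A /\ link_flag A.

End Dimer.

(* The link of a perfect matching A in X_D has one vertex for each edge of
   X_D at A, i.e. for each even cycle c with [c]A a perfect matching, and
   one simplex for each cube containing A.

   1. Power-group algebra: inside a family S of pairwise disjoint cycles,
      [T][T']B = [T (+) T']B, so the identification of cube corners is an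
      equivalence relation and every vertex of a cube represents it.
   2. Locality of perfect matchings: whether [T]A is a perfect matching can
      be tested one vertex at a time, and at each vertex at most one cycle of
      an independent family T is involved.  Hence a family of pairwise
      independent cycles which can be flipped one at a time can be flipped
      in every combination: it spans a cube (squares imply cubes).
   3. Simpliciality: a cube at A is recovered from the set of its edges at A.
   4. Flagness: pairwise adjacency of link vertices gives pairwise
      independence of their cycles, so by (2) they span a cube at A. *)

From Pilot Require Import Defs.
From Stdlib Require Import Arith List PeanoNat.
From Stdlib Require Import Classical FunctionalExtensionality PropExtensionality.

Lemma pred_ext {X : Type} (P Q : X -> Prop) : (forall x, P x <-> Q x) -> P = Q.
Proof.
  intro H. apply functional_extensionality; intro x.
  apply propositional_extensionality, H.
Qed.

Section DimerComplex.
Variables (V E : Type) (src tgt : E -> V).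

Local Notation pm := (perfect_matching V E src tgt).
Local Notation inc := (incident V E src tgt).
Local Notation indep := (independent V E src tgt).
Local Notation act := (act E).
Local Notation bracket := (bracket E).
Local Notation csd := (csymdiff E).
Local Notation csub := (csubset E).
Local Notation cube_ok := (cube_ok V E src tgt).
Local Notation is_corner := (is_corner V E src tgt).
Local Notation ceq := (corner_eq E).
Local Notation edge_corner := (edge_corner E).
Local Notation simplex_vertex := (simplex_vertex E).
Local Notation link_vertex := (link_vertex V E src tgt).

Definition disjoint_family (S : cset E) : Prop :=
  forall c d, S c -> S d -> c <> d -> forall e, c e -> d e -> False.

Lemma independent_disjoint (S : cset E) :
  (forall c d, S c -> S d -> c <> d -> indep c d) -> disjoint_family S.
Proof.
  intros H c d Sc Sd ne e ce de. apply (H c d Sc Sd ne e e ce de).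
  exists (src e). split; left; reflexivity.
Qed.

Lemma singleton_disjoint (S : cset E) (c : eset E) :
  (forall d, S d <-> d = c) -> disjoint_family S.
Proof.
  intros HS a b Sa Sb ne. exfalso. apply ne.
  apply HS in Sa. apply HS in Sb. congruence.
Qed.

Lemma csymdiff_csubset (S T T' : cset E) :
  csub T S -> csub T' S -> csub (csd T T') S.
Proof. intros HT HT' c [[Tc _] | [_ T'c]]; auto. Qed.

Lemma bracket_csymdiff (S T T' : cset E) : disjoint_family S ->
  csub T S -> csub T' S -> forall e,
  bracket (csd T T') e <-> (bracket T e /\ ~ bracket T' e) \/ (~ bracket T e /\ bracket T' e).
Proof.
  intros D HT HT' e. unfold bracket, csymdiff. split.
  - intros [c [[[Tc nT'c] | [nTc T'c]] ce]].
    + left. split; [eauto|]. intros [d [T'd de]].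
      destruct (classic (c = d)) as [<- | ne]; [tauto|].
      exact (D c d (HT c Tc) (HT' d T'd) ne e ce de).
    + right. split; [|eauto]. intros [d [Td de]].
      destruct (classic (c = d)) as [<- | ne]; [tauto|].
      exact (D c d (HT' c T'c) (HT d Td) ne e ce de).
  - intros [[[c [Tc ce]] nb] | [nb [c [T'c ce]]]].
    + exists c. split; [|auto]. left. split; auto. intro T'c; apply nb; eauto.
    + exists c. split; [|auto]. right. split; auto. intro Tc; apply nb; eauto.
Qed.

Lemma act_act (S T T' : cset E) (B : eset E) : disjoint_family S ->
  csub T S -> csub T' S -> act T (act T' B) = act (csd T T') B.
Proof.
  intros D HT HT'. apply pred_ext; intro e. unfold Defs.act at 1 3, esymdiff.
  rewrite (bracket_csymdiff S T T' D HT HT' e). unfold Defs.act, esymdiff. tauto.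
Qed.

Lemma act_inv (T : cset E) (A B : eset E) : act T B = A -> B = act T A.
Proof. intros <-. apply pred_ext; intro e; unfold Defs.act, esymdiff; tauto. Qed.

Lemma act_empty (T : cset E) (B : eset E) : (forall c, ~ T c) -> act T B = B.
Proof.
  intro H. apply pred_ext; intro e. unfold Defs.act, esymdiff, Defs.bracket.
  split.
  - intros [[[c [Tc _]] _] | [_ Be]]; [exfalso; eapply H; eauto | exact Be].
  - intro Be. right. split; [intros [c [Tc _]]; eapply H; eauto | exact Be].
Qed.

Lemma csymdiff_comm (T T' : cset E) : csd T T' = csd T' T.
Proof. apply pred_ext; intro c; unfold csymdiff; tauto. Qed.

Lemma csymdiff_empty_r (T : cset E) : csd T (fun _ => False) = T.
Proof. apply pred_ext; intro c; unfold csymdiff; tauto. Qed.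

Lemma corner_eq_refl (k : corner E) : ceq k k.
Proof.
  destruct k as [B S T]. split; [reflexivity|].
  exists (fun _ => False). simpl. split; [intros c []|]. split.
  - symmetry; apply act_empty; auto.
  - symmetry; apply csymdiff_empty_r.
Qed.

Lemma corner_eq_sym (k k' : corner E) : ceq k k' -> ceq k' k.
Proof.
  destruct k as [B S T], k' as [B' S' T']; unfold corner_eq; simpl.
  intros [-> [X [HX [-> ->]]]]. split; [reflexivity|].
  exists X. split; [exact HX|]. split.
  - apply act_inv; reflexivity.
  - apply pred_ext; intro c; unfold csymdiff; tauto.
Qed.

Lemma corner_eq_trans (k k' k'' : corner E) :
  disjoint_family (ccyc E k) -> ceq k k' -> ceq k' k'' -> ceq k k''.
Proof.
  destruct k as [B S T], k' as [B' S' T'], k'' as [B'' S'' T''];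
    unfold corner_eq; simpl.
  intros D [-> [X [HX [-> ->]]]] [-> [Y [HY [-> ->]]]]. split; [reflexivity|].
  exists (csd X Y). split; [apply csymdiff_csubset; assumption|]. split.
  - rewrite (act_act S Y X B D HY HX), csymdiff_comm. reflexivity.
  - apply pred_ext; intro c; unfold csymdiff; tauto.
Qed.

Lemma cube_ok_act (B : eset E) (S T0 : cset E) :
  cube_ok B S -> csub T0 S -> cube_ok (act T0 B) S.
Proof.
  intros [HB [Hf [He [Hi Hp]]]] HT0. pose proof (independent_disjoint S Hi) as D.
  repeat split; auto.
  intros T HT. rewrite (act_act S T T0 B D HT HT0).
  apply Hp, csymdiff_csubset; assumption.
Qed.

Definition matched_at (X : eset E) (v : V) : Prop :=
  exists e, X e /\ inc e v /\ forall f, X f -> inc f v -> f = e.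

Lemma matched_at_local (X Y : eset E) (v : V) :
  (forall f, inc f v -> (X f <-> Y f)) -> matched_at Y v -> matched_at X v.
Proof.
  intros H [e [Ye [ie U]]]. exists e. repeat split; auto; [apply H; auto|].
  intros f Xf if'. apply U; auto. apply H; auto.
Qed.

Lemma bracket_near_cycle (T : cset E) (c : eset E) (v : V) (e0 f : E) :
  (forall c d, T c -> T d -> c <> d -> indep c d) ->
  T c -> c e0 -> inc e0 v -> inc f v -> (bracket T f <-> c f).
Proof.
  intros HI Tc ce0 ie0 iff'. unfold Defs.bracket. split; [|eauto].
  intros [d [Td df]]. destruct (classic (d = c)) as [-> | ne]; [exact df|].
  exfalso. apply (HI c d Tc Td (fun h => ne (eq_sym h)) e0 f ce0 df).
  exists v. split; assumption.
Qed.

Lemma flip_independent_family (A : eset E) (S : cset E) : pm A ->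
  (forall c d, S c -> S d -> c <> d -> indep c d) ->
  (forall c, S c -> pm (act (fun d => d = c) A)) ->
  forall T, csub T S -> pm (act T A).
Proof.
  intros HA HI HS T HT v. change (matched_at (act T A) v).
  assert (HIT : forall c d, T c -> T d -> c <> d -> indep c d) by auto.
  destruct (classic (exists c, T c /\ exists e, c e /\ inc e v))
    as [[c [Tc [e0 [ce0 ie0]]]] | Nv].
  - (* v lies on the cycle c of T: [T]A agrees with [c]A near v *)
    apply matched_at_local with (Y := act (fun d => d = c) A);
      [|exact (HS c (HT c Tc) v)].
    intros f iff'. unfold Defs.act, esymdiff.
    rewrite (bracket_near_cycle T c v e0 f HIT Tc ce0 ie0 iff').
    rewrite (bracket_near_cycle (fun d => d = c) c v e0 f
               ltac:(intros ? ? -> -> []; reflexivity) eq_refl ce0 ie0 iff').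
    tauto.
  - (* v lies on no cycle of T: [T]A agrees with A near v *)
    apply matched_at_local with (Y := A); [|exact (HA v)].
    intros f iff'. assert (~ bracket T f) by (intros [c [Tc cf]]; apply Nv; eauto).
    unfold Defs.act, esymdiff. tauto.
Qed.

Lemma edge_corner_inj (A A' c d : eset E) :
  ceq (edge_corner A c) (edge_corner A' d) -> c = d.
Proof.
  intros [H _]. simpl in H. pose proof (f_equal (fun P => P c) H) as h.
  simpl in h. rewrite h. reflexivity.
Qed.

Lemma link_is_simplicial (A : eset E) : link_simplicial V E src tgt A.
Proof.
  split.
  - intros k _ c d _ _ H. exact (edge_corner_inj A A c d H).
  - intros [B1 S1 T1] [B2 S2 T2] [C1 [HT1 H1]] [C2 [HT2 H2]] H. simpl in *.
    assert (HS : S2 = S1).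
    { apply pred_ext; intro c; split; intro Sc.
      - destruct (proj2 (H (edge_corner A c)) (ex_intro _ c (conj Sc (corner_eq_refl _))))
          as [c' [S1c' Hc']].
        rewrite <- (edge_corner_inj _ _ _ _ Hc'); exact S1c'.
      - destruct (proj1 (H (edge_corner A c)) (ex_intro _ c (conj Sc (corner_eq_refl _))))
          as [c' [S2c' Hc']].
        rewrite <- (edge_corner_inj _ _ _ _ Hc'); exact S2c'. }
    subst S2. destruct C1 as [_ [_ [_ [Hi _]]]].
    pose proof (independent_disjoint S1 Hi) as D.
    split; [reflexivity|]. exists (csd T1 T2). simpl.
    split; [apply csymdiff_csubset; assumption|]. split.
    + apply act_inv in H2. rewrite H2, <- H1, (act_act S1 T2 T1 B1 D HT2 HT1).
      f_equal. apply csymdiff_comm.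
    + apply pred_ext; intro c; unfold csymdiff; tauto.
Qed.

Lemma link_vertex_edge_corner (A : eset E) (u : corner E) (c : eset E) :
  is_corner A u -> (forall d, ccyc E u d <-> d = c) -> ceq (edge_corner A c) u.
Proof.
  destruct u as [B S T0]. intros [_ [HT0 HA]] Hc. simpl in *. split.
  - apply pred_ext; intro d; simpl; rewrite Hc; tauto.
  - exists T0. simpl. split; [intros d Hd; apply Hc, HT0, Hd|]. split.
    + apply act_inv; exact HA.
    + apply pred_ext; intro d; unfold csymdiff; tauto.
Qed.

Lemma link_vertex_corner_eq (A : eset E) (u w : corner E) (c : eset E) :
  is_corner A u -> (forall d, ccyc E u d <-> d = c) ->
  (ceq u w <-> ceq (edge_corner A c) w).
Proof.
  intros Hu Hc. pose proof (link_vertex_edge_corner A u c Hu Hc) as Huc.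
  split; intro H.
  - apply (corner_eq_trans _ u); [|exact Huc|exact H].
    apply (singleton_disjoint _ c). simpl. tauto.
  - apply (corner_eq_trans _ (edge_corner A c));
      [apply (singleton_disjoint _ c Hc) | apply corner_eq_sym; exact Huc | exact H].
Qed.

Definition directions (L : list (corner E)) : cset E :=
  fun c => exists u, In u L /\ forall d, ccyc E u d <-> d = c.

Lemma directions_finite (A : eset E) (L : list (corner E)) :
  (forall u, In u L -> link_vertex A u) -> cfinite E (directions L).
Proof.
  induction L as [|u L IH]; intros HL.
  - exists nil. intro c. unfold directions; simpl. split; [intros [u [[] _]] | intros []].
  - destruct IH as [l Hl]; [intros w Hw; apply HL; simpl; auto|].
    destruct (HL u (or_introl eq_refl)) as [_ [cu Hcu]].
    exists (cu :: l). intro c. unfold directions in *. simpl. rewrite <- Hl. split.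
    + intros [w [[<- | Hw] Hd]]; [left | right; eauto].
      apply (proj1 (Hd cu)), Hcu. reflexivity.
    + intros [<- | [w [Hw Hd]]]; [exists u | exists w]; auto.
Qed.

Lemma direction_flippable (A : eset E) (L : list (corner E)) (c : eset E) :
  (forall u, In u L -> link_vertex A u) -> directions L c ->
  even_cycle V E src tgt c /\ pm (act (fun d => d = c) A).
Proof.
  intros HL [u [Hu Hcu]]. destruct (HL u Hu) as [[Hok [HT0 Hact]] _].
  destruct u as [B Su T0]; simpl in *. split.
  - destruct Hok as [_ [_ [He _]]]. apply He, Hcu. reflexivity.
  - rewrite <- Hact. apply (cube_ok_act B Su T0 Hok HT0).
    intros d ->. apply Hcu. reflexivity.
Qed.

(* Directions of link vertices joined by an edge of the link are
   independent, since they span a common cube. *)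
Lemma directions_independent (A : eset E) (L : list (corner E)) :
  (forall u v, In u L -> In v L -> ~ ceq u v ->
     exists k, is_corner A k /\
       forall w, simplex_vertex A k w <-> (ceq u w \/ ceq v w)) ->
  forall c d, directions L c -> directions L d -> c <> d -> indep c d.
Proof.
  intros Hpair c d [u [Hu Hcu]] [w [Hw Hcw]] ne.
  assert (nuw : ~ ceq u w).
  { intros [Heq _]. apply ne. apply (f_equal (fun P => P d)) in Heq.
    symmetry. apply Hcu. rewrite <- Heq. apply Hcw. reflexivity. }
  destruct (Hpair u w Hu Hw nuw) as [k [Hk Hsv]].
  assert (in_cube : forall z cz, (forall d, ccyc E z d <-> d = cz) ->
                      ceq u z \/ ceq w z -> ccyc E k cz).
  { intros z cz Hz Hor. destruct (proj2 (Hsv z) Hor) as [c' [kc' [Heq _]]].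
    simpl in Heq. apply (f_equal (fun P => P c')) in Heq.
    assert (c' = cz) by (apply Hz; rewrite Heq; reflexivity). subst. exact kc'. }
  destruct Hk as [[_ [_ [_ [Hi _]]]] _]. apply Hi; [| |exact ne].
  - apply (in_cube u c Hcu). left. apply corner_eq_refl.
  - apply (in_cube w d Hcw). right. apply corner_eq_refl.
Qed.

Lemma link_is_flag (A : eset E) : pm A -> link_flag V E src tgt A.
Proof.
  intros HA L HL Hpair.
  pose proof (directions_independent A L Hpair) as Hind.
  assert (Hcube : cube_ok A (directions L)).
  { repeat split.
    - exact HA.
    - exact (directions_finite A L HL).
    - intros c Hc. exact (proj1 (direction_flippable A L c HL Hc)).
    - exact Hind.
    - apply flip_independent_family; auto.
      intros c Hc. exact (proj2 (direction_flippable A L c HL Hc)). }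
  exists (Corner E A (directions L) (fun _ => False)). split.
  - split; [exact Hcube|]. split; [intros c []|]. simpl. apply act_empty; auto.
  - intro w. unfold Defs.simplex_vertex; simpl. split.
    + intros [c [[u [Hu Hcu]] Hw]]. exists u. split; [exact Hu|].
      apply (link_vertex_corner_eq A u w c); auto. apply HL; exact Hu.
    + intros [u [Hu Hw]]. destruct (HL u Hu) as [Hc [c Hcu]].
      exists c. split; [exists u; auto|]. apply (link_vertex_corner_eq A u w c); auto.
Qed.

End DimerComplex.

Theorem theorem6p3 (V E : Type) (src tgt : E -> V)
  (Hnonempty : inhabited V)
  (Hnoloop : forall e : E, src e <> tgt e)
  (Hnoisolated : forall v : V, exists e : E, src e = v \/ tgt e = v) :
  dimer_npc V E src tgt.
Proof.
  intros A HA. split.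
  - apply link_is_simplicial.
  - apply link_is_flag. exact HA.
Qed.
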